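(* Let $p>5$ be a prime such that $-1$ is a quadratic residue modulo $p$ and $2$ and $3$ are quadratic non-residues modulo $p$. Then the path system $\mathcal{P}_p$ on the Paley graph $G_p$ is not metrizable.
   Context: Let $R$ and $N$ denote the sets of nonzero quadratic residues and quadratic non-residues in $\mathbb{F}_p$. The Paley graph $G_p$ has vertex set $\mathbb{F}_p$, with $a,b$ adjacent iff $a-b\in R$. A path system $\mathcal{P}$ in a graph $G=(V,E)$ is a collection of simple paths such that for every pair of distinct vertices $u,v$ there is exactly one path $P_{u,v}\in\mathcal{P}$ connecting them. $\mathcal{P}$ is metrizable if there exists $w:E\to(0,\infty)$ such that for all $u,v$, $w(P_{u,v})\le w(Q)$ for every $u$–$v$ path $Q$ in $G$ (where $w$ of a path is the sum of its edge weights). The path system $\mathcal{P}_p$ is defined for $a\neq b\in\mathbb{F}_p$ by: if $b-a\in R$, then $P_{a,b}=(a,b)$; if $b-a=3$, then $P_{a,b}=(a,a+1,a+2,b)$ (and $P_{b,a}$ is the same path); if $b-a\in N$ and $b-a\neq\pm3$, then $P_{a,b}=(a,\tfrac{a+b}{2},b)$. *)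

From HB Require Import structures.
From mathcomp Require Import all_boot all_order all_algebra.
From mathcomp Require Import Rstruct.
From Stdlib Require Import Reals.
Set Implicit Arguments. Unset Strict Implicit. Unset Printing Implicit Defensive.
Import Order.TTheory GRing.Theory Num.Theory.
Local Open Scope ring_scope.

Definition qr (p : nat) (x : 'F_p) : bool := (x != 0) && [exists y : 'F_p, y * y == x].

Definition paley_adj (p : nat) : rel 'F_p := fun a b => qr (a - b).

Definition is_path (V : eqType) (G : rel V) (u v : V) (s : seq V) : Prop :=
  exists t, [/\ s = u :: t, path G u t, last u t = v & uniq s].

Definition path_weight (V : Type) (w : V -> V -> R) (s : seq V) : R :=
  \sum_(e <- zip s (behead s)) w e.1 e.2.

Definition edge_weight (V : eqType) (G : rel V) (w : V -> V -> R) : Prop :=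
  forall a b, G a b -> (0 < w a b)%R /\ w a b = w b a.

Definition metrizable (V : eqType) (G : rel V) (P : V -> V -> seq V) : Prop :=
  exists w : V -> V -> R, edge_weight G w /\
    forall u v, u != v -> forall Q, is_path G u v Q ->
      (path_weight w (P u v) <= path_weight w Q)%R.

Definition Pp (p : nat) (a b : 'F_p) : seq 'F_p :=
  if qr (b - a) then [:: a; b]
  else if b - a == 3%:R then [:: a; a + 1; a + 2%:R; b]
  else if a - b == 3%:R then [:: a; a - 1; a - 2%:R; b]   (* reverse of P_{b,a} *)
  else [:: a; (a + b) / 2%:R; b].

(* Let [w] be edge weights for which every path of [Pp] is shortest, and let
   [f x] be the total weight of the translates [{a, a + x}] of the edge
   [{0, x}].  Summing the shortest-path inequalities over all translates gives
   [f (- x) = f x], then [2 f(y) <= f(z1) + f(z2)] for residues [z1 + z2 = 2y]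
   when [2y] is a non-residue other than [±3] (compare [a, a + y, a + 2y] with
   [a, a + z1, a + 2y]), and [3 f(1) <= f(4) + f(-1)] (compare
   [a, a + 1, a + 2, a + 3] with [a, a + 4, a + 3]).
   Take [z] maximizing [f] on the group [±4^i 6^j], which consists of residues
   because [6 = 2 * 3] is one, minus the [y] with [2y = ±3].  The identity
   [2z = 6z + (-4z)] makes [4z] and [6z] maximizers as well, unless one of them
   is excluded, in which case an explicit chain of such identities reaches [1].
   Since [-1], [4] and [6] generate the group, [1] is a maximizer, so
   [2 f(1) <= f(4) <= f(1)], contradicting [f(1) > 0]. *)

From Stdlib Require Import Reals.
From mathcomp Require Import all_boot all_order all_algebra all_solvable all_field.
From mathcomp Require Import zify ring lra.
From mathcomp Require Import Rstruct.
Import Order.TTheory GRing.Theory Num.Theory.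
Set Implicit Arguments. Unset Strict Implicit. Unset Printing Implicit Defensive.
Local Open Scope ring_scope.

Section QuadraticResidues.

Variable p : nat.
Implicit Types a b x : 'F_p.

Lemma qr_neq0 a : qr a -> a != 0.
Proof. by case/andP. Qed.

Lemma qr_sqr a : a != 0 -> qr (a * a).
Proof. by move=> a0; apply/andP; split; [exact: mulf_neq0 | apply/existsP; exists a]. Qed.

Lemma qr1 : qr (1 : 'F_p).
Proof. by rewrite -[1]mulr1 qr_sqr ?oner_neq0. Qed.

Lemma qrM a b : qr a -> qr b -> qr (a * b).
Proof.
move=> qa qb; apply/andP; split; first by rewrite mulf_neq0 ?qr_neq0.
case/andP: qa => _ /existsP[s /eqP <-]; case/andP: qb => _ /existsP[t /eqP <-].
by apply/existsP; exists (s * t); apply/eqP; ring.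
Qed.

Lemma qrX a n : qr a -> qr (a ^+ n).
Proof. by move=> qa; elim: n => [|n IHn]; rewrite ?expr0 ?qr1 // exprS qrM. Qed.

Lemma qrN a : qr (-1 : 'F_p) -> qr (- a) = qr a.
Proof.
move=> qrN1; apply/idP/idP => qa; last by rewrite -mulN1r qrM.
by rewrite -[a]opprK -mulN1r qrM.
Qed.

Lemma qr_nqrM a b : qr a -> ~~ qr b -> b != 0 -> ~~ qr (a * b).
Proof.
case/andP=> a0 /existsP[s /eqP sa] nqb b0; apply: contra nqb => /andP[_ /existsP[t /eqP tab]].
have s0 : s != 0 by apply: contraNneq a0 => s0; rewrite -sa s0 mul0r.
rewrite /qr b0 /=; apply/existsP; exists (t / s).
by apply/eqP; rewrite -(mulKf a0 b) -tab -sa; field.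
Qed.

Hypothesis pp : prime p.

Lemma Fp_fermat x : x != 0 -> x ^+ p.-1 = 1.
Proof.
move=> x0; apply: (mulIf x0); rewrite mul1r -exprSr prednK ?prime_gt0 //.
by have := expf_card x; rewrite card_Fp.
Qed.

Lemma Fp_expr_mod x n : x != 0 -> x ^+ n = x ^+ (n %% p.-1).
Proof.
by move=> x0; rewrite {1}(divn_eq n p.-1) exprD mulnC exprM Fp_fermat // expr1n mul1r.
Qed.

Lemma Fp_expr_inv x : x != 0 -> x ^+ p.-2 = x^-1.
Proof.
move=> x0; apply: (mulfI x0); rewrite mulfV // -exprS.
suff -> : p.-2.+1 = p.-1 by rewrite Fp_fermat.
by have := prime_gt1 pp; lia.
Qed.

Lemma Fp_prim_root : exists g : 'F_p, p.-1.-primitive_root g.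
Proof.
pose units := [seq x <- enum 'F_p | x != 0].
have: has p.-1.-primitive_root units.
  apply: has_prim_root; first by have := prime_gt1 pp; lia.
  - by apply/allP => x; rewrite mem_filter => /andP[x0 _]; apply/unity_rootP/Fp_fermat.
  - by rewrite filter_uniq // enum_uniq.
  have := cardC1 (0 : 'F_p); rewrite card_Fp // => <-.
  by rewrite size_filter cardE enumT /enum_mem size_filter.
by case/hasP => g _; exists g.
Qed.

Lemma nqrM a b : a != 0 -> b != 0 -> ~~ qr a -> ~~ qr b -> qr (a * b).
Proof.
have [g g_prim] := Fp_prim_root.
have g0 : g != 0.
  apply/eqP => g0; have := prim_expr_order g_prim; rewrite g0 expr0n.
  have -> : (p.-1 == 0)%N = false by have := prime_gt1 pp; lia.
  by move/eqP; rewrite eq_sym oner_eq0.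
have qr_even k : ~~ odd k -> qr (g ^+ k).
  by move=> ek; rewrite -(even_halfK ek) -addnn exprD qr_sqr ?expf_neq0.
move=> a0 b0; have [[i _] /= ->] := prim_rootP g_prim (Fp_fermat a0).
have [[j _] /= ->] := prim_rootP g_prim (Fp_fermat b0).
move=> /(contra (qr_even i))/negPn oi /(contra (qr_even j))/negPn oj.
by rewrite -exprD qr_even // oddD oi oj.
Qed.

Lemma Fp_natr_neq0 k : (0 < k < p)%N -> (k%:R : 'F_p) != 0.
Proof.
case/andP=> k0 kp; apply/eqP => /(congr1 val).
by rewrite /= val_Fp_nat // modn_small // => k_eq0; rewrite k_eq0 in k0.
Qed.

End QuadraticResidues.

Lemma paley_small_primes p :
  prime p -> (5 < p)%N -> qr (-1 : 'F_p) -> ~~ qr (3%:R : 'F_p) -> (13 < p)%N.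
Proof.
move=> pp p5 qrN1 nqr3; rewrite ltnNge; apply/negP => p13.
have : p \in [:: 7; 11; 13]%N by move: p pp p5 p13 {qrN1 nqr3}; do 14 case=> //.
rewrite !inE => /or3P[] /eqP p_eq; subst p.
- move: qrN1 => /andP[_ /existsP[[m lt_m7]]].
  by do 7 case: m lt_m7 => [|m] lt_m7 //.
- move: qrN1 => /andP[_ /existsP[[m lt_m11]]].
  by do 11 case: m lt_m11 => [|m] lt_m11 //.
- by move/negP: nqr3; apply; apply/andP; split => //; apply/existsP; exists 4%:R.
Qed.

Section PaleyPaths.

Variable p : nat.
Implicit Types a b c x y : 'F_p.

(* Rules out the differences [2x = ±3], for which [Pp] does not use the midpoint. *)
Definition midpath_ok x := (x + x != 3%:R) && (- (x + x) != 3%:R).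

Lemma paley_adj_shift a x : paley_adj a (a + x) = qr (- x).
Proof. by rewrite /paley_adj opprD addNKr. Qed.

Lemma paley_adj_neq a b : paley_adj a b -> a != b.
Proof. by move/qr_neq0; rewrite subr_eq0. Qed.

Lemma is_path3 a b c :
  paley_adj a b -> paley_adj b c -> a != c -> is_path (@paley_adj p) a c [:: a; b; c].
Proof.
move=> ab bc ac; exists [:: b; c]; split => //=; first by rewrite ab bc.
by rewrite !inE negb_or (paley_adj_neq ab) (paley_adj_neq bc) ac.
Qed.

Lemma Pp_midpoint a y : (2%:R : 'F_p) != 0 -> ~~ qr (y + y) -> midpath_ok y ->
  Pp a (a + (y + y)) = [:: a; a + y; a + (y + y)].
Proof.
move=> n2 nqr /andP[y3 my3]; rewrite /Pp addrC addKr (negbTE nqr) (negbTE y3).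
rewrite opprD addNKr (negbTE my3); congr [:: _; _; _].
by apply: (mulIf n2); rewrite divfK // mulr_natr mulr2n; ring.
Qed.

Lemma Pp_three a : ~~ qr (3%:R : 'F_p) ->
  Pp a (a + 3%:R) = [:: a; a + 1; a + 2%:R; a + 3%:R].
Proof. by move=> nqr3; rewrite /Pp addrC addKr (negbTE nqr3) eqxx. Qed.

End PaleyPaths.

Lemma path_weight3 (T : Type) (w : T -> T -> R) a b c :
  path_weight w [:: a; b; c] = w a b + w b c.
Proof. by rewrite /path_weight /= !big_cons big_nil addr0. Qed.

Lemma path_weight4 (T : Type) (w : T -> T -> R) a b c d :
  path_weight w [:: a; b; c; d] = w a b + w b c + w c d.
Proof. by rewrite /path_weight /= !big_cons big_nil addr0 addrA. Qed.

Section ShiftWeights.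

Variables (p : nat) (w : 'F_p -> 'F_p -> R).
Hypothesis w_edge : edge_weight (@paley_adj p) w.
Implicit Types a x y : 'F_p.

Definition shift_weight x : R := \sum_a w a (a + x).

Lemma shift_weight_translate x y :
  \sum_a w (a + x) (a + y) = shift_weight (y - x).
Proof.
rewrite /shift_weight [RHS](reindex_inj (addIr x)).
by apply: eq_bigr => a _; congr (w _ _); ring.
Qed.

Lemma shift_weightN x : qr x -> shift_weight (- x) = shift_weight x.
Proof.
move=> qx; rewrite -sub0r -shift_weight_translate; apply: eq_bigr => a _.
have adj : paley_adj (a + x) a by rewrite /paley_adj addrAC subrr add0r.
by rewrite addr0; have [_ ->] := w_edge adj.
Qed.

Lemma shift_weight1_gt0 : qr (-1 : 'F_p) -> 0 < shift_weight 1.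
Proof.
move=> qrN1; have w_gt0 a : 0 < w a (a + 1).
  have adj : paley_adj a (a + 1) by rewrite paley_adj_shift.
  by have [/RltP] := w_edge adj.
rewrite /shift_weight (bigD1 0) //= ltr_pwDl ?w_gt0 //.
by apply: sumr_ge0 => a _; apply: ltW.
Qed.

Hypothesis Pp_shortest : forall u v, u != v ->
  forall Q, is_path (@paley_adj p) u v Q -> path_weight w (Pp u v) <= path_weight w Q.

Lemma shift_weight_midpoint y z1 z2 : qr (-1 : 'F_p) -> (2%:R : 'F_p) != 0 ->
  y + y != 0 -> ~~ qr (y + y) -> midpath_ok y -> qr z1 -> qr z2 -> z1 + z2 = y + y ->
  shift_weight y + shift_weight y <= shift_weight z1 + shift_weight z2.
Proof.
move=> qrN1 n2 yy0 nqr y_ok qz1 qz2 z12.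
have pointwise a :
    w a (a + y) + w (a + y) (a + (y + y)) <= w a (a + z1) + w (a + z1) (a + (y + y)).
  rewrite -!path_weight3 -(Pp_midpoint a n2 nqr y_ok); apply: Pp_shortest.
    by rewrite -subr_eq0 opprD addNKr oppr_eq0.
  apply: is_path3; rewrite ?paley_adj_shift ?(qrN _ qrN1) //.
    by rewrite /paley_adj opprD addrACA subrr add0r -z12 opprD addNKr (qrN _ qrN1).
  by rewrite -subr_eq0 opprD addNKr oppr_eq0.
have -> : shift_weight y + shift_weight y =
    \sum_a (w a (a + y) + w (a + y) (a + (y + y))).
  by rewrite big_split /= shift_weight_translate addrK.
have -> : shift_weight z1 + shift_weight z2 =
    \sum_a (w a (a + z1) + w (a + z1) (a + (y + y))).
  by rewrite big_split /= shift_weight_translate -z12 [z1 + z2]addrC addrK.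
exact: ler_sum.
Qed.

Lemma shift_weight_three : qr (-1 : 'F_p) -> ~~ qr (3%:R : 'F_p) ->
  (2%:R : 'F_p) != 0 -> (3%:R : 'F_p) != 0 ->
  shift_weight 1 + shift_weight 1 + shift_weight 1 <= shift_weight 4%:R + shift_weight (-1).
Proof.
move=> qrN1 nqr3 n2 n3.
have pointwise a : w a (a + 1) + w (a + 1) (a + 2%:R) + w (a + 2%:R) (a + 3%:R) <=
                   w a (a + 4%:R) + w (a + 4%:R) (a + 3%:R).
  rewrite -path_weight4 -path_weight3 -(Pp_three a nqr3); apply: Pp_shortest.
    by rewrite -subr_eq0 opprD addNKr oppr_eq0.
  apply: is_path3.
  - by rewrite paley_adj_shift (qrN _ qrN1) (_ : 4 = 2 * 2)%N // natrM qr_sqr.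
  - by rewrite /paley_adj opprD addrACA subrr add0r -natrB //; apply: qr1.
  - by rewrite -subr_eq0 opprD addNKr oppr_eq0.
have -> : shift_weight 1 + shift_weight 1 + shift_weight 1 =
    \sum_a (w a (a + 1) + w (a + 1) (a + 2%:R) + w (a + 2%:R) (a + 3%:R)).
  rewrite !big_split /= !shift_weight_translate.
  by rewrite -natrB // [2%:R]mulr2n addrK.
have -> : shift_weight 4%:R + shift_weight (-1) =
    \sum_a (w a (a + 4%:R) + w (a + 4%:R) (a + 3%:R)).
  by rewrite big_split /= shift_weight_translate -opprB -natrB.
exact: ler_sum.
Qed.
End ShiftWeights.

Definition pm46 (p : nat) (b : bool) (i j : nat) : 'F_p :=
  (-1) ^+ b * 4%:R ^+ i * 6%:R ^+ j.

(* Exponents below [p] suffice by Fermat's little theorem, see [in_pm46P]. *)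
Definition in_pm46 (p : nat) (x : 'F_p) : bool :=
  [exists b : bool, exists i : 'I_p, exists j : 'I_p, x == pm46 p b i j].

Section MaximumArgument.

Variables (p : nat) (f : 'F_p -> R).
Hypotheses (pp : prime p) (p_gt13 : (13 < p)%N).
Hypotheses (qrN1 : qr (-1 : 'F_p)) (nqr2 : ~~ qr (2%:R : 'F_p)) (nqr3 : ~~ qr (3%:R : 'F_p)).
Hypothesis fN : forall x, qr x -> f (- x) = f x.
Hypothesis f_midpoint : forall y z1 z2 : 'F_p, y + y != 0 -> ~~ qr (y + y) -> midpath_ok y ->
  qr z1 -> qr z2 -> z1 + z2 = y + y -> f y + f y <= f z1 + f z2.
Implicit Types x y : 'F_p.

Lemma small_natr_neq0 k : (0 < k <= 13)%N -> (k%:R : 'F_p) != 0.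
Proof. by case/andP=> k0 k13; rewrite Fp_natr_neq0 // k0 (leq_ltn_trans k13). Qed.

Let n2 := small_natr_neq0 (k := 2) isT.
Let n3 := small_natr_neq0 (k := 3) isT.
Let n4 := small_natr_neq0 (k := 4) isT.
Let n6 := small_natr_neq0 (k := 6) isT.
Let n8 := small_natr_neq0 (k := 8) isT.

Lemma qr4 : qr (4%:R : 'F_p).
Proof. by rewrite (_ : 4 = 2 * 2)%N // natrM qr_sqr. Qed.

Lemma qr6 : qr (6%:R : 'F_p).
Proof. by rewrite (_ : 6 = 2 * 3)%N // natrM nqrM. Qed.

Lemma in_pm46P x : reflect (exists b i j, x = pm46 p b i j) (in_pm46 x).
Proof.
apply: (iffP idP) => [/existsP[b /existsP[i /existsP[j /eqP ->]]]|[b [i [j ->]]]].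
  by exists b, i, j.
have mod_lt k : (k %% p.-1 < p)%N.
  by rewrite (leq_trans (ltn_pmod _ _)) ?leq_pred // -ltnS prednK ?prime_gt1 ?prime_gt0.
apply/existsP; exists b; apply/existsP; exists (Ordinal (mod_lt i)).
apply/existsP; exists (Ordinal (mod_lt j)).
by rewrite /pm46 /= [4%:R ^+ i](Fp_expr_mod pp) // [6%:R ^+ j](Fp_expr_mod pp).
Qed.

Lemma in_pm46N x : in_pm46 x -> in_pm46 (- x).
Proof.
case/in_pm46P=> b [i [j ->]]; apply/in_pm46P; exists (~~ b), i, j.
by rewrite /pm46 -!mulNr; case: b; rewrite ?expr0 ?expr1 ?opprK.
Qed.

Lemma in_pm46M4 x : in_pm46 x -> in_pm46 (4%:R * x).
Proof.
case/in_pm46P=> b [i [j ->]]; apply/in_pm46P; exists b, i.+1, j.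
by rewrite /pm46 exprS !mulrA [4%:R * _]mulrC.
Qed.

Lemma in_pm46M6 x : in_pm46 x -> in_pm46 (6%:R * x).
Proof.
case/in_pm46P=> b [i [j ->]]; apply/in_pm46P; exists b, i, j.+1.
by rewrite /pm46 exprS mulrCA.
Qed.

Lemma qr_pm46 x : in_pm46 x -> qr x.
Proof. by case/in_pm46P=> b [i [j ->]]; rewrite /pm46 !qrM ?qrX ?qr4 ?qr6. Qed.

Lemma midpath_okN x : midpath_ok x -> midpath_ok (- x).
Proof. by rewrite /midpath_ok -opprD opprK andbC. Qed.

Lemma midpath_ok_witness x (c1 c2 : 'F_p) k1 k2 :
  (0 < k1 <= 13)%N -> (0 < k2 <= 13)%N ->
  c1 * (x + x - 3%:R) = k1%:R -> c2 * (- (x + x) - 3%:R) = k2%:R -> midpath_ok x.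
Proof.
move=> /small_natr_neq0 k1_neq0 /small_natr_neq0 k2_neq0 e1 e2.
apply/andP; split; apply/eqP => x3.
  by move/eqP: k1_neq0; apply; rewrite -e1 x3 subrr mulr0.
by move/eqP: k2_neq0; apply; rewrite -e2 x3 subrr mulr0.
Qed.

Let in_pm46_1 : in_pm46 (1 : 'F_p).
Proof. by apply/in_pm46P; exists false, 0%N, 0%N; rewrite /pm46 !expr0 !mulr1. Qed.

Let in_pm46_inv4 : in_pm46 (- (4%:R)^-1 : 'F_p).
Proof.
apply/in_pm46P; exists true, p.-2, 0%N.
by rewrite /pm46 Fp_expr_inv // expr1 expr0 mulr1 mulN1r.
Qed.

Let in_pm46_inv6 : in_pm46 (- (6%:R)^-1 : 'F_p).
Proof.
apply/in_pm46P; exists true, 0%N, p.-2.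
by rewrite /pm46 Fp_expr_inv // expr1 expr0 mulr1 mulN1r.
Qed.

Let in_pm46_2_3 : in_pm46 (2%:R / 3%:R : 'F_p).
Proof.
apply/in_pm46P; exists false, 1%N, p.-2.
by rewrite /pm46 Fp_expr_inv // expr0 expr1 mul1r; field; rewrite n3 n6.
Qed.

Let in_pm46_4 : in_pm46 (4%:R : 'F_p).
Proof. by rewrite -[4%:R]mulr1 in_pm46M4. Qed.

Let ok_1 : midpath_ok (1 : 'F_p).
Proof. by apply: (@midpath_ok_witness _ (-1) (-1) 1 5) => //; ring. Qed.

Let ok_4 : midpath_ok (4%:R : 'F_p).
Proof. by apply: (@midpath_ok_witness _ 1 (-1) 5 11) => //; ring. Qed.

Let ok_inv4 : midpath_ok (- (4%:R)^-1 : 'F_p).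
Proof. by apply: (@midpath_ok_witness _ (- 2%:R) (- 2%:R) 7 5) => //; field. Qed.

Let ok_inv6 : midpath_ok (- (6%:R)^-1 : 'F_p).
Proof. by apply: (@midpath_ok_witness _ (- 3%:R) (- 3%:R) 10 8) => //; field. Qed.

Let ok_2_3 : midpath_ok (2%:R / 3%:R : 'F_p).
Proof. by apply: (@midpath_ok_witness _ (- 3%:R) (- 3%:R) 5 13) => //; field. Qed.

Section Maximizer.

Variable z : 'F_p.
Hypotheses (z_pm46 : in_pm46 z) (z_ok : midpath_ok z).
Hypothesis z_max : forall x, in_pm46 x -> midpath_ok x -> f x <= f z.

Definition maximal x := [/\ in_pm46 x, midpath_ok x & f x = f z].

Lemma maximal_split y z1 z2 : maximal y ->
  in_pm46 z1 -> midpath_ok z1 -> in_pm46 z2 -> midpath_ok z2 -> z1 + z2 = y + y ->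
  maximal z1 /\ maximal z2.
Proof.
case=> y_pm46 y_ok fy z1_pm46 z1_ok z2_pm46 z2_ok z12.
have yy : y + y = y * 2%:R by rewrite mulr_natr mulr2n.
have qy := qr_pm46 y_pm46.
have yy0 : y + y != 0 by rewrite yy; exact: mulf_neq0 (qr_neq0 qy) n2.
have nqr_yy : ~~ qr (y + y) by rewrite yy; exact: qr_nqrM.
have := f_midpoint yy0 nqr_yy y_ok (qr_pm46 z1_pm46) (qr_pm46 z2_pm46) z12.
have := z_max z1_pm46 z1_ok; have := z_max z2_pm46 z2_ok.
by rewrite fy => z2_le z1_le mid; split; split => //; lra.
Qed.

Lemma maximalN x : maximal x -> maximal (- x).
Proof.
case=> x_pm46 x_ok fx; split; rewrite ?in_pm46N ?midpath_okN //.
by rewrite fN ?qr_pm46.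
Qed.

Lemma maximal1_of_quarter s : maximal s -> 4%:R * s = 1 -> maximal 1.
Proof.
move=> ms s4.
have s_eq : s = (4%:R)^-1 by apply: (mulfI n4); rewrite mulfV.
rewrite {}s_eq in ms.
have sum4 : - (6%:R)^-1 + 2%:R / 3%:R = (4%:R)^-1 + (4%:R)^-1 :> 'F_p.
  by field; rewrite n3 n4 n6.
have sum6 : -1 + 2%:R / 3%:R = - (6%:R)^-1 + - (6%:R)^-1 :> 'F_p.
  by field; rewrite n3 n6.
have [m6 _] := maximal_split ms in_pm46_inv6 ok_inv6 in_pm46_2_3 ok_2_3 sum4.
have [mN1 _] :=
  maximal_split m6 (in_pm46N in_pm46_1) (midpath_okN ok_1) in_pm46_2_3 ok_2_3 sum6.
by rewrite -[1]opprK; apply: maximalN.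
Qed.

Lemma maximal1_of_3_8 s : maximal s -> 8%:R * s = 3%:R -> maximal 1.
Proof.
move=> ms s8.
have s_eq : s = 3%:R / 8%:R by apply: (mulfI n8); rewrite s8 mulrCA mulfV ?mulr1.
rewrite {}s_eq in ms.
have sum_eq : 1 + - (4%:R)^-1 = 3%:R / 8%:R + 3%:R / 8%:R :> 'F_p.
  by field; rewrite n4 n8.
by have [] := maximal_split ms in_pm46_1 ok_1 in_pm46_inv4 ok_inv4 sum_eq.
Qed.

Lemma maximal_M46 x : maximal x -> maximal 1 \/ maximal (4%:R * x) /\ maximal (6%:R * x).
Proof.
move=> mx; have [x_pm46 _ _] := mx.
have [ok6|] := boolP (midpath_ok (6%:R * x)); last first.
  rewrite negb_and !negbK => /orP[] /eqP x3; left.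
    by apply: (maximal1_of_quarter mx); apply: (mulfI n3); rewrite mulr1 -[RHS]x3; ring.
  by apply: (maximal1_of_quarter (maximalN mx)); apply: (mulfI n3); rewrite mulr1 -[RHS]x3; ring.
have [ok4|] := boolP (midpath_ok (- 4%:R * x)); last first.
  rewrite negb_and !negbK => /orP[] /eqP x3; left.
    by apply: (maximal1_of_3_8 (maximalN mx)); rewrite -x3; ring.
  by apply: (maximal1_of_3_8 mx); rewrite -x3; ring.
have x_pm46N4 : in_pm46 (- 4%:R * x) by rewrite mulNr in_pm46N ?in_pm46M4.
have sum_eq : 6%:R * x + - 4%:R * x = x + x by ring.
have [m6 m4] := maximal_split mx (in_pm46M6 x_pm46) ok6 x_pm46N4 ok4 sum_eq.
by right; split => //; rewrite -[4%:R * x]opprK -mulNr; apply: maximalN.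
Qed.

Lemma maximal_M46X x m n :
  maximal x -> maximal 1 \/ maximal (x * 4%:R ^+ m * 6%:R ^+ n).
Proof.
move=> mx; elim: n => [|n IHn].
  rewrite expr0 mulr1; elim: m => [|m IHm]; first by right; rewrite expr0 mulr1.
  case: IHm => [|/maximal_M46[|[m4 _]]]; [by left | by left | right].
  by rewrite exprS mulrCA.
case: IHn => [|/maximal_M46[|[_ m6]]]; [by left | by left | right].
by rewrite exprS mulrCA.
Qed.

Lemma maximal1 : maximal 1.
Proof.
have [b [i [j z_eq]]] := in_pm46P _ z_pm46.
have [//|] := maximal_M46X (i * p.-2) (j * p.-2) (And3 z_pm46 z_ok erefl).
have -> : z * 4%:R ^+ (i * p.-2) * 6%:R ^+ (j * p.-2) = (-1) ^+ b.
  rewrite z_eq /pm46 !exprM !Fp_expr_inv ?expf_neq0 //.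
  by field; rewrite !expf_neq0.
by case: b {z_eq}; rewrite ?expr0 // expr1 => /maximalN; rewrite opprK.
Qed.

End Maximizer.

Lemma f1_le0 : f 1 + f 1 + f 1 <= f 4%:R + f (-1) -> f 1 <= 0.
Proof.
move=> f_three; pose S x := in_pm46 x && midpath_ok x.
have S1 : S 1 by rewrite /S in_pm46_1 ok_1.
have [z /andP[z_pm46 z_ok] S_max] := arg_maxP f S1.
have z_max x : in_pm46 x -> midpath_ok x -> f x <= f z.
  by move=> x_pm46 x_ok; apply: S_max; rewrite /S x_pm46.
have [_ _ f1] := maximal1 z_pm46 z_ok z_max.
have f4 := z_max 4%:R in_pm46_4 ok_4.
by move: f_three f4; rewrite (fN (qr1 p)) /=; lra.
Qed.

End MaximumArgument.

Theorem proposition2p2 (p : nat) :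
  prime p -> (5 < p)%N ->
  qr (-1 : 'F_p) -> ~~ qr (2%:R : 'F_p) -> ~~ qr (3%:R : 'F_p) ->
  ~ metrizable (@paley_adj p) (@Pp p).
Proof.
move=> pp p5 qrN1 nqr2 nqr3 [w [w_edge w_min]].
have p_gt13 := paley_small_primes pp p5 qrN1 nqr3.
have natr_neq0 := small_natr_neq0 pp p_gt13.
have Pp_shortest u v (uv : u != v) Q (uQv : is_path (@paley_adj p) u v Q) :
  path_weight w (Pp u v) <= path_weight w Q by apply/RleP; exact: w_min.
have := shift_weight1_gt0 w_edge qrN1; rewrite ltNge => /negP; apply.
apply: (f1_le0 pp p_gt13 qrN1 nqr2 nqr3).
- by move=> x; apply: shift_weightN.
- by move=> y z1 z2; apply: shift_weight_midpoint; rewrite ?natr_neq0.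
- by apply: shift_weight_three; rewrite ?natr_neq0.
Qed.
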